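(* A strongly connected tournament $G$ is triangle-connected if and only if $G$ has no nontrivial homogeneous set that contains (the vertex set of) a cyclic triangle.
   Context: A tournament is a finite, non-null, loopless directed graph in which for any two distinct vertices $u,v$ there is exactly one edge with both ends in $\{u,v\}$; write $u\to v$ for the edge from $u$ to $v$. A homogeneous set of $G$ is a set $X\subseteq V(G)$ such that each $v\in V(G)\setminus X$ either has $v\to x$ for all $x\in X$ or $x\to v$ for all $x\in X$; it is nontrivial if $1<|X|<|V(G)|$. $G$ is strongly connected if for any two vertices $u,v$ there are directed paths from $u$ to $v$ and from $v$ to $u$. Two cyclic triangles in $G$ are adjacent if they share exactly two vertices; cyclic triangles $C,C'$ are triangle-connected if there is a sequence $C_1,\dots,C_n$ ($n\ge1$) of cyclic triangles with $C_1=C$, $C_n=C'$, and $C_i$ adjacent to $C_{i+1}$ for all $i$. A tournament is triangle-connected if it is strongly connected and any two of its cyclic triangles are triangle-connected. *)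

(* A tournament on a finite vertex type T is given by its
   edge relation e : rel T, with (e u v) meaning u -> v. *)
From mathcomp Require Import all_boot.
Set Implicit Arguments. Unset Strict Implicit. Unset Printing Implicit Defensive.

Section Tournaments.
Variable T : finType.
Variable e : rel T.

Definition tournament : Prop :=
  (0 < #|T|) /\ (forall u, ~~ e u u) /\
  (forall u v, u != v -> (e u v (+) e v u)).

Definition strongly_connected : Prop := forall u v : T, connect e u v.

Definition homogeneous (X : {set T}) : Prop :=
  forall v, v \notin X ->
    (forall x, x \in X -> e v x) \/ (forall x, x \in X -> e x v).

Definition nontrivial (X : {set T}) : Prop := 1 < #|X| < #|T|.

Definition cyclic_triangle (C : {set T}) : bool :=
  [exists a, exists b, exists c,
     [&& C == [set a; b; c], e a b, e b c & e c a]].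

Definition tri_adj : rel {set T} :=
  fun C D => [&& cyclic_triangle C, cyclic_triangle D & #|C :&: D| == 2].

Definition triangle_connected : Prop :=
  strongly_connected /\
  (forall C D, cyclic_triangle C -> cyclic_triangle D -> connect tri_adj C D).

End Tournaments.

From mathcomp Require Import all_boot.
Set Implicit Arguments. Unset Strict Implicit. Unset Printing Implicit Defensive.

(* If a homogeneous set X contains a cyclic triangle, a cyclic triangle
   with two vertices in X has its third one in X too (an outside vertex sees
   all of X the same way), so the whole triangle component stays inside X.
   But when X is nontrivial, strong connectivity yields an edge t -> u
   between the vertices outside X dominated by X and those dominating X, and
   x -> t -> u -> x is a cyclic triangle through x in X leaving X.
   Conversely, the vertices covered by the triangle component of a cyclic
   triangle form a homogeneous set: a vertex v outside it cannot see an edge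
   p -> q of one of its triangles as v -> p -> q -> v. So, when no nontrivial
   homogeneous set contains a triangle, every component covers all vertices,
   and a local analysis of two triangles sharing a vertex shows that two such
   components coincide. *)

Lemma connect_exit (T : finType) (r : rel T) (S : {pred T}) x y :
  connect r x y -> x \in S -> y \notin S ->
  exists t u, [/\ connect r x t, t \in S, u \notin S & r t u].
Proof.
case/connectP=> p + ->; elim: p x => [|z p IH] x /=; first by move=> _ ->.
case/andP=> rxz pz xS yS; case: (boolP (z \in S)) => [zS | zS]; last first.
  by exists x, z; rewrite connect0.
have [t [u [czt tS uS rtu]]] := IH z pz zS yS.
by exists t, u; split=> //; apply: connect_trans (connect1 rxz) czt.
Qed.

Section Tournament.
Variables (T : finType) (e : rel T).

Local Notation tri_conn := (connect (tri_adj e)).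

Lemma set3_rot (a b c : T) : [set a; b; c] = [set b; c; a].
Proof. by apply/setP=> z; rewrite !inE; case: (z == a); case: (z == b); case: (z == c). Qed.

Lemma card_set3I_le (X : {set T}) a b c :
  #|[set a; b; c] :&: X| <= (a \in X) + (b \in X) + (c \in X).
Proof.
have card1I z : #|[set z] :&: X| <= (z \in X).
  case: (boolP (z \in X)) => zX.
    by rewrite (leq_trans (subset_leq_card (subsetIl _ _))) ?cards1.
  by rewrite leqn0 cards_eq0 setI_eq0 disjoints1.
rewrite !setIUl; apply: leq_trans (leq_card_setU _ _).1 _; rewrite leq_add //.
by apply: leq_trans (leq_card_setU _ _).1 _; rewrite leq_add.
Qed.

Lemma cyclic_triangleP C : cyclic_triangle e C ->
  exists a b c, [/\ C = [set a; b; c], e a b, e b c & e c a].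
Proof. by case/existsP=> a /existsP[b /existsP[c /and4P[/eqP-> ? ? ?]]]; exists a, b, c. Qed.

Lemma cyclic_triangle3 a b c : e a b -> e b c -> e c a -> cyclic_triangle e [set a; b; c].
Proof.
move=> eab ebc eca; apply/existsP; exists a; apply/existsP; exists b.
by apply/existsP; exists c; rewrite eqxx eab ebc eca.
Qed.

Lemma cyclic_triangle_at C v : cyclic_triangle e C -> v \in C ->
  exists x y, [/\ C = [set v; x; y], e v x, e x y & e y v].
Proof.
case/cyclic_triangleP=> a [b [c [-> eab ebc eca]]]; rewrite !inE => /orP[/orP[]|]/eqP->.
- by exists b, c.
- by exists c, a; rewrite set3_rot.
- by exists a, b; rewrite -set3_rot.
Qed.

Lemma tri_adj_sym : symmetric (tri_adj e).
Proof. by move=> C D; rewrite /tri_adj setIC andbCA. Qed.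

Lemma tri_conn_sym : connect_sym (tri_adj e).
Proof. exact: sym_connect_sym tri_adj_sym. Qed.

Lemma tri_conn_cyclic C D : cyclic_triangle e C -> tri_conn C D -> cyclic_triangle e D.
Proof.
move=> cC /connectP[p + ->]; elim: p C cC => [|F p IH] C //= cC /andP[/and3P[_ cF _]].
exact: IH.
Qed.

Hypothesis tour : tournament e.

Lemma edge_neq u w : e u w -> u != w.
Proof. by case: tour => _ [loopless _] euw; apply: contraTneq euw => ->. Qed.

Lemma edge_asym u w : e u w -> ~~ e w u.
Proof. by case: tour => _ [_ one] euw; move: (one u w (edge_neq euw)); rewrite euw. Qed.

Lemma negb_edge u w : u != w -> ~~ e u w = e w u.
Proof. by case: tour => _ [_ one] /one; case: (e u w); case: (e w u). Qed.

Lemma card_cyclic_triangle C : cyclic_triangle e C -> #|C| = 3.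
Proof.
case/cyclic_triangleP=> a [b [c [-> eab ebc eca]]].
rewrite [[set a; b; c]]setUC cardsU1 cards2 (edge_neq eab) !inE negb_or.
by rewrite (edge_neq eca) eq_sym (edge_neq ebc).
Qed.

Lemma tri_conn_meet2 F G : cyclic_triangle e F -> cyclic_triangle e G ->
  2 <= #|F :&: G| -> tri_conn F G.
Proof.
move=> cF cG le2; have [eq2 | ne2] := eqVneq #|F :&: G| 2.
  by apply: connect1; rewrite /tri_adj cF cG eq2.
have /eqP FIG : F :&: G == F.
  rewrite eqEcard subsetIl (card_cyclic_triangle cF) /=.
  by rewrite ltn_neqAle eq_sym ne2 le2.
have FG : F \subset G by apply/setIidPl.
suff -> : F = G by apply: connect0.
apply/eqP; rewrite eqEcard FG.
by rewrite (card_cyclic_triangle cF) (card_cyclic_triangle cG).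
Qed.

Lemma tri_conn_share_edge F G u w : cyclic_triangle e F -> cyclic_triangle e G ->
  u \in F -> w \in F -> u \in G -> w \in G -> e u w -> tri_conn F G.
Proof.
move=> cF cG uF wF uG wG euw; apply: tri_conn_meet2 => //.
have <- : #|[set u; w]| = 2 by rewrite cards2 (edge_neq euw).
by apply: subset_leq_card; apply/subsetP=> z; rewrite !inE => /orP[]/eqP->; apply/andP.
Qed.

(* A path u -> w -> z through the common vertex w of two unconnected
   triangles must be closed transitively, for z -> u would create a
   triangle adjacent to both. *)
Lemma tri_conn_forced_edge F G u w z :
  cyclic_triangle e F -> cyclic_triangle e G -> ~~ tri_conn F G ->
  u \in F -> w \in F -> w \in G -> z \in G -> e u w -> e w z -> e u z.
Proof.
move=> cF cG nFG uF wF wG zG euw ewz.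
have [zu | nzu] := eqVneq z u.
  by rewrite zu in zG; rewrite (tri_conn_share_edge cF cG uF wF zG wG euw) in nFG.
apply: contraNT nFG; rewrite negb_edge 1?eq_sym // => ezu.
have cH := cyclic_triangle3 euw ewz ezu.
apply: connect_trans (tri_conn_share_edge cF cH uF wF _ _ euw) _; rewrite ?inE ?eqxx ?orbT //.
by apply: (tri_conn_share_edge cH cG _ _ wG zG ewz); rewrite !inE eqxx ?orbT.
Qed.

Definition between (s p : T) : {set T} := [set t | e t s && e p t].

Lemma tri_conn_between r s p t : e r s -> e s p -> e p r -> t \in between s p ->
  tri_conn [set t; s; p] [set r; s; p].
Proof.
rewrite inE => ers esp epr /andP[ets ept].
by apply: (tri_conn_share_edge (cyclic_triangle3 ets esp ept) (cyclic_triangle3 ers esp epr)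
  _ _ _ _ esp); rewrite !inE eqxx ?orbT.
Qed.

Definition triangle_closed (K X : {set T}) : Prop :=
  forall a b c, tri_conn K [set a; b; c] -> e a b -> e b c -> e c a ->
    a \in X -> b \in X -> c \in X.

Lemma triangle_closed_two_sub K X H : triangle_closed K X -> tri_conn K H ->
  cyclic_triangle e H -> 2 <= #|H :&: X| -> H \subset X.
Proof.
move=> clX cKH /cyclic_triangleP[a [b [c [defH eab ebc eca]]]]; rewrite defH in cKH *.
have Hc := clX a b c cKH eab ebc eca.
have Ha : b \in X -> c \in X -> a \in X by apply: clX; rewrite // -set3_rot.
have Hb : c \in X -> a \in X -> b \in X by apply: clX; rewrite // set3_rot.
move=> /leq_trans/(_ (card_set3I_le X a b c)) two.
have : [|| (a \in X) && (b \in X), (b \in X) && (c \in X) | (c \in X) && (a \in X)].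
  by move: two; case: (a \in X); case: (b \in X); case: (c \in X).
case/or3P=> /andP[xX yX]; [move: (Hc xX yX) | move: (Ha xX yX) | move: (Hb xX yX)] => zX;
  by apply/subsetP=> t; rewrite !inE => /orP[/orP[]|]/eqP->.
Qed.

Lemma triangle_closed_component K X H : triangle_closed K X -> cyclic_triangle e K ->
  2 <= #|K :&: X| -> tri_conn K H -> H \subset X.
Proof.
move=> clX cK K2 cKH; apply: contraT => HX.
have KX := triangle_closed_two_sub clX (connect0 _ K) cK K2.
have [G [G' [cKG /= GX G'X adjGG']]] :=
  connect_exit (S := fun F : {set T} => F \subset X) cKH KX HX.
case/negP: G'X; case/and3P: (adjGG') => _ cG' /eqP GG'.
apply: triangle_closed_two_sub clX (connect_trans cKG (connect1 adjGG')) cG' _.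
by rewrite -GG' subset_leq_card // setIC setIS.
Qed.

Lemma homogeneous_edge X v x y : homogeneous e X -> v \notin X ->
  x \in X -> y \in X -> e v x = e v y.
Proof.
move=> hX vX xX yX; case: (hX v vX) => [vX_ | X_v]; first by rewrite !vX_.
by rewrite (negbTE (edge_asym (X_v x xX))) (negbTE (edge_asym (X_v y yX))).
Qed.

Lemma homogeneous_triangle_closed K X : homogeneous e X -> triangle_closed K X.
Proof.
move=> hX a b c _ eab ebc eca aX bX; apply: contraT => cX.
by have := homogeneous_edge hX cX aX bX; rewrite eca (negbTE (edge_asym ebc)).
Qed.

(* The triangle is found on the edge by which a path from x0 leaves
   X :|: [set t | e x0 t]; if that set is everything, a path from v back to x0
   would have to enter X from a vertex dominated by X, which is impossible. *)
Lemma homogeneous_exit_triangle X x0 v : strongly_connected e -> homogeneous e X ->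
  x0 \in X -> v \notin X -> exists t u, [/\ u \notin X, e x0 t, e t u & e u x0].
Proof.
move=> sc hX x0X vX; pose S := X :|: [set t | e x0 t].
have x0S : x0 \in S by rewrite inE x0X.
case: (pickP [predC S]) => [w /= wS | allS].
  have [t [u [_ tS uS etu]]] := connect_exit (sc x0 w) x0S wS.
  move: tS uS; rewrite !inE negb_or => tS /andP[uX nx0u].
  have eux0 : e u x0 by rewrite -negb_edge // eq_sym; apply: contraNneq uX => ->.
  have tX : t \notin X.
    apply/negP=> tX; have := homogeneous_edge hX uX tX x0X.
    by rewrite eux0 (negbTE (edge_asym etu)).
  by exists t, u; move: tS; rewrite (negbTE tX).
have vS : v \in ~: X by rewrite inE.
have x0S' : x0 \notin ~: X by rewrite inE negbK.
have [t [u [_]]] := connect_exit (sc v x0) vS x0S'.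
rewrite !inE negbK => tX uX etu.
have := allS t; rewrite /= !inE (negbTE tX) /= => /negbFE ex0t.
by have := homogeneous_edge hX tX uX x0X; rewrite etu (negbTE (edge_asym ex0t)).
Qed.

Lemma homogeneous_triangle_unconnected X C : strongly_connected e ->
  homogeneous e X -> nontrivial X -> cyclic_triangle e C -> C \subset X ->
  exists D, cyclic_triangle e D /\ ~~ tri_conn C D.
Proof.
move=> sc hX /andP[X_gt1 X_ltT] cC CX.
have /card_gt0P[x0 x0X] : 0 < #|X| by apply: ltnW.
have /subsetPn[v _ vX] : ~~ ([set: T] \subset X).
  by apply: contraL X_ltT => /subset_leq_card; rewrite cardsT -leqNgt.
have [t [u [uX ex0t etu eux0]]] := homogeneous_exit_triangle sc hX x0X vX.
exists [set x0; t; u]; split; first exact: cyclic_triangle3.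
apply: contra uX => cCD.
have CX2 : 2 <= #|C :&: X| by rewrite (setIidPl CX) (card_cyclic_triangle cC).
have := triangle_closed_component (homogeneous_triangle_closed hX) cC CX2 cCD.
by move/subsetP; apply; rewrite !inE eqxx orbT.
Qed.

Definition tri_cover (K : {set T}) : {set T} := \bigcup_(F | tri_conn K F) F.

Lemma sub_tri_cover (K : {set T}) : K \subset tri_cover K.
Proof. exact: bigcup_sup (connect0 _ K). Qed.

Lemma tri_cover_conn K F : tri_conn K F -> tri_cover K = tri_cover F.
Proof. by move=> cKF; apply: eq_bigl; apply: (same_connect tri_conn_sym cKF). Qed.

Lemma tri_cover_homogeneous K : cyclic_triangle e K -> homogeneous e (tri_cover K).
Proof.
move=> cK v vU.
have inU F x : tri_conn K F -> x \in F -> x \in tri_cover K.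
  by move=> cKF xF; apply/bigcupP; exists F.
have no_mixed F p q : tri_conn K F -> p \in F -> q \in F -> e v p -> e p q -> ~~ e q v.
  move=> cKF pF qF evp epq; apply: contra vU => eqv; apply: (inU [set v; p; q]); last first.
    by rewrite !inE eqxx.
  apply: (connect_trans cKF); apply: (tri_conn_share_edge (tri_conn_cyclic cK cKF)
    (cyclic_triangle3 evp epq eqv) pF qF _ _ epq); by rewrite !inE eqxx ?orbT.
have swap x : x \in tri_cover K -> ~~ e v x = e x v.
  by move=> xU; apply: negb_edge; apply: contraNneq vU => ->.
have thirdU a b c : tri_conn K [set a; b; c] -> c \in tri_cover K.
  by move=> cKF; apply: (inU _ _ cKF); rewrite !inE eqxx ?orbT.
have clOut : triangle_closed K [set x | e v x].
  move=> a b c cKF _ ebc _; rewrite !inE => _ evb.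
  rewrite -[e v c]negbK swap ?(thirdU _ _ _ cKF) //.
  by apply: (no_mixed _ b c cKF) => //; rewrite !inE eqxx ?orbT.
have clIn : triangle_closed K [set x | e x v].
  move=> a b c cKF _ _ eca; rewrite !inE => eav _.
  rewrite -swap ?(thirdU _ _ _ cKF) //; apply: contraL eav => evc.
  by apply: (no_mixed _ c a cKF) => //; rewrite !inE eqxx ?orbT.
have : 3 <= #|K :&: [set x | e v x]| + #|K :&: [set x | e x v]|.
  rewrite -(card_cyclic_triangle cK) -(cardsID [set x | e v x] K) leq_add2l.
  apply: subset_leq_card; apply/subsetP=> x; rewrite !inE => /andP[nevx xK].
  by rewrite xK -swap // (subsetP (sub_tri_cover K)).
case: (leqP 2 #|K :&: [set x | e v x]|) => [Out2 _ | Out_lt2 sum3].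
  left=> x /bigcupP[F cKF xF].
  by have := subsetP (triangle_closed_component clOut cK Out2 cKF) x xF; rewrite inE.
have In2 : 2 <= #|K :&: [set x | e x v]|.
  by rewrite -(leq_add2l 1) (leq_trans sum3) // leq_add2r -ltnS.
right=> x /bigcupP[F cKF xF].
by have := subsetP (triangle_closed_component clIn cK In2 cKF) x xF; rewrite inE.
Qed.

Lemma tri_cover_nontrivial K : cyclic_triangle e K -> tri_cover K != [set: T] ->
  nontrivial (tri_cover K).
Proof.
move=> cK nfull; apply/andP; split; last by rewrite -cardsT proper_card // properT.
by rewrite (leq_trans _ (subset_leq_card (sub_tri_cover K))) ?(card_cyclic_triangle cK).
Qed.

(* Every [set t; s; p] with t in between s p is adjacent to [set r; s; p], so
   completing a triangle of the component of K outside between s p would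
   connect K to [set r; s; p]; thus the component stays inside between s p,
   which does not contain s. *)
Lemma tri_cover_between K r s p : cyclic_triangle e K -> tri_cover K = [set: T] ->
  e r s -> e s p -> e p r -> ~~ tri_conn K [set r; s; p] -> ~~ (K \subset between s p).
Proof.
move=> cK full ers esp epr nKD; apply/negP=> KB.
have offD F t : tri_conn K F -> e t s -> e p t -> ~~ tri_conn F [set t; s; p].
  move=> cKF ets ept; apply: contra nKD => cFt; apply: connect_trans cKF _.
  by apply: connect_trans cFt _; apply: tri_conn_between; rewrite ?inE ?ets.
have clB : triangle_closed K (between s p).
  move=> a b c cKF eab ebc eca; rewrite !inE => /andP[eas epa] /andP[ebs epb].
  have cF := cyclic_triangle3 eab ebc eca.
  rewrite (tri_conn_forced_edge cF (cyclic_triangle3 eas esp epa) (offD _ _ cKF eas epa)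
    _ _ _ _ eca eas) ?inE ?eqxx ?orbT //=.
  have nbF : ~~ tri_conn [set b; s; p] [set a; b; c] by rewrite tri_conn_sym offD.
  by rewrite (tri_conn_forced_edge (cyclic_triangle3 ebs esp epb) cF nbF _ _ _ _ epb ebc)
    ?inE ?eqxx ?orbT.
have /bigcupP[H cKH sH] : s \in tri_cover K by rewrite full inE.
have KB2 : 2 <= #|K :&: between s p| by rewrite (setIidPl KB) (card_cyclic_triangle cK).
have := subsetP (triangle_closed_component clB cK KB2 cKH) s sH.
by rewrite inE; case: tour => _ [loopless _]; rewrite (negbTE (loopless s)).
Qed.

(* Two unconnected triangles v s p and v x y through v force y -> s and
   p -> x; then, however the edges between x, s and between p, y are
   oriented, either a triangle connected to both appears, or v x y lies in
   between s p, or v s p lies in between x y. *)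
Lemma tri_conn_of_covers C D : cyclic_triangle e C -> cyclic_triangle e D ->
  tri_cover C = [set: T] -> tri_cover D = [set: T] -> tri_conn C D.
Proof.
move=> cC cD fullC fullD; apply: contraT => nCD.
have [v [s [p [defD evs esp epv]]]] := cyclic_triangleP cD.
have /bigcupP[F cCF vF] : v \in tri_cover C by rewrite fullC inE.
have cF := tri_conn_cyclic cC cCF.
have [x [y [defF evx exy eyv]]] := cyclic_triangle_at cF vF.
have nFD : ~~ tri_conn F D by apply: contra nCD; apply: connect_trans.
have nDF : ~~ tri_conn D F by rewrite tri_conn_sym.
have fullF : tri_cover F = [set: T] by rewrite -(tri_cover_conn cCF).
subst D F.
have eys : e y s.
  by apply: (tri_conn_forced_edge cF cD nFD) eyv evs; rewrite !inE eqxx ?orbT.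
have epx : e p x.
  by apply: (tri_conn_forced_edge cD cF nDF) epv evx; rewrite !inE eqxx ?orbT.
have toD t : e t s -> e p t -> tri_conn [set t; s; p] [set v; s; p].
  by move=> ets ept; apply: tri_conn_between; rewrite ?inE ?ets.
have [exs | nxs] := boolP (e x s); have [epy | npy] := boolP (e p y).
- case/negP: (tri_cover_between cF fullF evs esp epv nFD).
  by apply/subsetP=> z; rewrite !inE => /orP[/orP[]|]/eqP->; apply/andP.
- case/negP: npy; have cH := cyclic_triangle3 exs esp epx.
  have nHF : ~~ tri_conn [set x; s; p] [set v; x; y].
    by apply: contra nDF => cHF; apply: connect_trans cHF; rewrite tri_conn_sym toD.
  by apply: (tri_conn_forced_edge cH cF nHF) epx exy; rewrite !inE eqxx ?orbT.
- case/negP: nxs; have cH := cyclic_triangle3 eys esp epy.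
  have nFH : ~~ tri_conn [set v; x; y] [set y; s; p].
    by apply: contra nFD => cFH; apply: connect_trans cFH _; rewrite toD.
  by apply: (tri_conn_forced_edge cF cH nFH) exy eys; rewrite !inE eqxx ?orbT.
- have xs_neq : x != s.
    apply: contraNneq nFD => xs; apply: (tri_conn_share_edge cF cD _ _ _ _ evx);
      by rewrite ?xs !inE eqxx ?orbT.
  have py_neq : p != y.
    apply: contraNneq nFD => py; apply: (tri_conn_share_edge cF cD _ _ _ _ eyv);
      by rewrite -?py !inE eqxx ?orbT.
  rewrite negb_edge // in nxs; rewrite negb_edge // in npy.
  case/negP: (tri_cover_between cD fullD evx exy eyv nDF).
  by apply/subsetP=> z; rewrite !inE => /orP[/orP[]|]/eqP->; apply/andP.
Qed.

End Tournament.

Theorem corollary4p2 (T : finType) (e : rel T) :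
  tournament e -> strongly_connected e ->
  (triangle_connected e <->
   ~ (exists X : {set T}, homogeneous e X /\ nontrivial X /\
        exists C : {set T}, cyclic_triangle e C /\ C \subset X)).
Proof.
move=> tour sc; split=> [[_ tc] [X [hX [ntX [C [cC CX]]]]] | noHom].
  have [D [cD nCD]] := homogeneous_triangle_unconnected tour sc hX ntX cC CX.
  by rewrite tc in nCD.
have covers K : cyclic_triangle e K -> tri_cover e K = [set: T].
  move=> cK; apply/eqP; apply: contraT => nfull; case: noHom; exists (tri_cover e K).
  split; first exact: tri_cover_homogeneous.
  split; first exact: tri_cover_nontrivial.
  by exists K; split; last exact: sub_tri_cover.
split=> [// | C D cC cD].
exact: (tri_conn_of_covers tour cC cD (covers _ cC) (covers _ cD)).
Qed.
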